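(* Let $\mathcal B$ be a BMC with $\mathbf c^*_q<\infty$ for all $q\in\mathcal T$, and consider the Q-learning process with learning rates $\lambda_i\in[0,1]$ satisfying $\sum_{i=0}^\infty\lambda_i=\infty$, a fixed selection distribution with $p_q\ge p_{\min}>0$ for all $q$, and initial value $Q_0=\kappa\mathbf c^*$ for a scalar $\kappa\ge0$. Then $\lim_{i\to\infty}\mathbb E Q_i=\mathbf c^*$.
   Context: A branching Markov chain (BMC) is $\mathcal B=(\mathcal T,p,c)$ with $\mathcal T$ a finite set of types, $p(q)$ for each $q\in\mathcal T$ a probability distribution with finite support over finite lists $\mathcal T^*$ of types (the offspring distribution), and $c:\mathcal T\to\mathbb R_{>0}$ a strictly positive cost. For a list $\alpha$, $|\alpha|$ is its length and $\alpha_i$ its $i$-th element. $\mathbf c^*_q\in[0,\infty]$ denotes the expected total cost until extinction starting from the single entity $q$; equivalently $\mathbf c^*$ is the least fixed point in $[0,\infty]^{\mathcal T}$ of $F(\mathbf x)_q=c(q)+\sum_\alpha p(q)(\alpha)\sum_{i=1}^{|\alpha|}\mathbf x_{\alpha_i}$. Q-learning process for a BMC: given deterministic learning rates $\lambda_i\in[0,1]$, a probability distribution $(p_q)_{q\in\mathcal T}$ and an initial vector $Q_0\in\mathbb R_{\ge0}^{\mathcal T}$, at each step $i=0,1,2,\dots$ a type $q_i$ is selected with probability $p_{q_i}$ independently of all previous randomness, then a list $\beta^i$ is drawn from $p(q_i)$ independently, and $Q_{i+1}(q_i)=(1-\lambda_i)Q_i(q_i)+\lambda_i\big(c(q_i)+\sum_{j=1}^{|\beta^i|}Q_i(\beta^i_j)\big)$,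 while $Q_{i+1}(q)=Q_i(q)$ for $q\ne q_i$. $\mathbb E Q_i$ is the componentwise expectation. *)

From HB Require Import structures.
From mathcomp Require Import all_boot all_order all_algebra.
From mathcomp Require Import all_classical all_reals all_analysis.
Set Implicit Arguments. Unset Strict Implicit. Unset Printing Implicit Defensive.
Import Order.TTheory GRing.Theory Num.Theory.
Local Open Scope ring_scope.

Section BMC.
Variables (R : realType) (T : finType).

(* A BMC: offspring distribution p q given as a finite weighted list of
   (offspring list, probability); cost c. *)
Definition offspring_distr (p : T -> seq (seq T * R)) :=
  forall q, (forall a, a \in p q -> 0 <= a.2) /\ \sum_(a <- p q) a.2 = 1.

Definition cost_pos (c : T -> R) := forall q, 0 < c q.

Definition Fop (p : T -> seq (seq T * R)) (c : T -> R) (x : T -> \bar R) (q : T)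
  : \bar R :=
  ((c q)%:E + \sum_(a <- p q) (a.2)%:E * \sum_(t <- a.1) x t)%E.

Definition is_cstar p c (cs : T -> \bar R) :=
  [/\ (forall q, (0 <= cs q)%E),
      (forall q, Fop p c cs q = cs q) &
      (forall y : T -> \bar R, (forall q, (0 <= y q)%E) ->
         (forall q, Fop p c y q = y q) -> forall q, (cs q <= y q)%E)].

Definition qupdate (c : T -> R) (l : R) (Q : T -> R) (q : T) (b : seq T)
  : T -> R :=
  fun r => if r == q then (1 - l) * Q q + l * (c q + \sum_(t <- b) Q t)
           else Q r.

(* Exact law of Q_i as a finite mixture (weight, value) over all histories
   (q_0, beta^0, ..., q_{i-1}, beta^{i-1}). *)
Fixpoint qlaw (p : T -> seq (seq T * R)) (c : T -> R) (ps : T -> R)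
  (lam : nat -> R) (Q0 : T -> R) (i : nat) : seq (R * (T -> R)) :=
  match i with
  | 0 => [:: (1, Q0)]
  | i'.+1 =>
      flatten [seq flatten [seq [seq (wQ.1 * ps q * a.2,
                                       qupdate c (lam i') wQ.2 q a.1)
                                 | a <- p q] | q <- enum T]
              | wQ <- qlaw p c ps lam Q0 i']
  end.

Definition EQ p c ps lam Q0 (i : nat) (q : T) : R :=
  \sum_(wQ <- qlaw p c ps lam Q0 i) wQ.1 * wQ.2 q.

End BMC.

(* Write [Gop x q] for the expected total [x]-value of the offspring of [q],
   so that on finite vectors the operator [F] is [x |-> c + Gop x] and the
   finite least fixed point [v = fine c^*] satisfies [v = c + Gop v].
   1. Expectation is linear, so averaging one random update of the exact law
      [qlaw] shows that [E Q_i] follows the deterministic relaxation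
      [E Q_(i+1) = E Q_i + ps * lam_i * (c + Gop (E Q_i) - E Q_i)].
   2. Since [Gop] is monotone and [c >= eps v] for some [eps > 0], one
      relaxation step shrinks a relative error bound [|x - v| <= B v] by the
      factor [1 - pmin eps lam_i].  Starting from [|kappa v - v| = |kappa - 1| v]
      this gives [|E Q_n - v| <= |kappa - 1| (prod_(k<n) (1 - a lam_k)) v]
      with [a = pmin eps].
   3. The product satisfies [prod (1 - a lam_k) * (1 + a sum lam_k) <= 1], so
      it vanishes when [sum lam_k] diverges, and a squeeze gives the theorem. *)

From HB Require Import structures.
From mathcomp Require Import all_boot all_order all_algebra.
From mathcomp Require Import all_classical all_reals all_analysis.
From mathcomp Require Import ring lra.
Set Implicit Arguments. Unset Strict Implicit. Unset Printing Implicit Defensive.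
Import Order.TTheory GRing.Theory Num.Theory numFieldNormedType.Exports.
Local Open Scope classical_set_scope.
Local Open Scope ring_scope.

Section OffspringMean.
Variables (R : realType) (T : finType) (p : T -> seq (seq T * R)).

(* The linear part of [Fop] on real vectors: [Gop x q] is the expected total
   [x]-value of the offspring of [q], so that [Fop p c x = c + Gop x]. *)
Definition Gop (x : T -> R) (q : T) : R :=
  \sum_(a <- p q) a.2 * \sum_(t <- a.1) x t.

Lemma Gop_scale (x : T -> R) k q : Gop (fun t => k * x t) q = k * Gop x q.
Proof.
rewrite /Gop big_distrr; apply: eq_bigr => a _.
by rewrite -big_distrr /= mulrCA.
Qed.

Lemma Gop_sub (x y : T -> R) q : Gop (fun t => x t - y t) q = Gop x q - Gop y q.
Proof. by rewrite /Gop -sumrB; apply: eq_bigr => a _; rewrite sumrB mulrBr. Qed.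

Hypothesis hp : offspring_distr p.

Lemma offspring_avg_const q k : \sum_(a <- p q) a.2 * k = k.
Proof. by have [_ hs] := hp q; rewrite -big_distrl /= hs mul1r. Qed.

Lemma Gop_norm_le (x y : T -> R) q :
  (forall t, `|x t| <= y t) -> `|Gop x q| <= Gop y q.
Proof.
move=> hxy; rewrite /Gop; apply: le_trans (ler_norm_sum _ _ _) _.
have [h0 _] := hp q.
rewrite big_seq_cond [X in _ <= X]big_seq_cond; apply: ler_sum => a /andP [ha _].
rewrite normrM (ger0_norm (h0 a ha)); apply: ler_wpM2l; first exact: h0.
by apply: le_trans (ler_norm_sum _ _ _) _; apply: ler_sum => t _; exact: hxy.
Qed.

End OffspringMean.

Section FixedPoint.
Variables (R : realType) (T : finType) (p : T -> seq (seq T * R)) (c : T -> R).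

Lemma Fop_fin (x : T -> R) q :
  Fop p c (fun t => (x t)%:E) q = (c q + Gop p x q)%:E.
Proof.
rewrite /Fop /Gop; under eq_bigr do rewrite sumEFin -EFinM.
by rewrite sumEFin -EFinD.
Qed.

Lemma cstar_real_fixpoint (cs : T -> \bar R) :
  is_cstar p c cs -> (forall q, (cs q < +oo)%E) ->
  (forall r, 0 <= fine (cs r)) /\
  (forall r, fine (cs r) = c r + Gop p (fun t => fine (cs t)) r).
Proof.
move=> [cs0 csfix _] csfin.
have csE r : cs r = (fine (cs r))%:E by rewrite fineK // ge0_fin_numE.
split=> [r|r]; first exact: fine_ge0.
have csfunE : cs = fun t => (fine (cs t))%:E by apply: funext.
by move: (csfix r); rewrite {1}csfunE Fop_fin [in RHS]csE => -[].
Qed.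

End FixedPoint.

Section Expectation.
Variables (R : realType) (T : finType) (p : T -> seq (seq T * R)) (c : T -> R)
  (ps : T -> R) (lam : nat -> R) (Q0 : T -> R).

Definition expect i (phi : (T -> R) -> R) : R :=
  \sum_(wQ <- qlaw p c ps lam Q0 i) wQ.1 * phi wQ.2.

(* Tower property: [Q_(i+1)] is [Q_i] followed by one random update. *)
Lemma expect_step i phi : expect i.+1 phi =
  expect i (fun Q => \sum_(q : T) ps q * \sum_(a <- p q) a.2 *
                       phi (qupdate c (lam i) Q q a.1)).
Proof.
rewrite /expect /= big_flatten /= big_map; apply: eq_bigr => wQ _.
rewrite big_flatten /= big_map -big_enum /= big_distrr /=; apply: eq_bigr => q _.
rewrite big_map mulrA big_distrr /=; apply: eq_bigr => a _.
by rewrite !mulrA.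
Qed.

Lemma expect_ext i (f g : (T -> R) -> R) :
  (forall Q, f Q = g Q) -> expect i f = expect i g.
Proof. by move=> h; apply: eq_bigr => x _; rewrite h. Qed.

Lemma expect_add i f g : expect i (fun Q => f Q + g Q) = expect i f + expect i g.
Proof. by rewrite /expect -big_split /=; apply: eq_bigr => x _; rewrite mulrDr. Qed.

Lemma expect_scale i k f : expect i (fun Q => k * f Q) = k * expect i f.
Proof. by rewrite /expect big_distrr /=; apply: eq_bigr => x _; rewrite mulrCA. Qed.

Lemma expect_sum i (I : Type) (s : seq I) (F : I -> (T -> R) -> R) :
  expect i (fun Q => \sum_(x <- s) F x Q) = \sum_(x <- s) expect i (F x).
Proof.
rewrite /expect (eq_bigr (fun wQ => \sum_(x <- s) wQ.1 * F x wQ.2)).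
  by rewrite exchange_big.
by move=> wQ _; rewrite big_distrr.
Qed.

Lemma expect_Gop i r : expect i (fun Q => Gop p Q r) = Gop p (EQ p c ps lam Q0 i) r.
Proof.
by rewrite /Gop expect_sum; apply: eq_bigr => a _; rewrite expect_scale expect_sum.
Qed.

Hypothesis hp : offspring_distr p.
Hypothesis hps : \sum_(q : T) ps q = 1.

Lemma expect_const i k : expect i (fun _ => k) = k.
Proof.
elim: i => [|i IH]; first by rewrite /expect /= big_seq1 mul1r.
rewrite expect_step -[RHS]IH; apply: expect_ext => Q.
under eq_bigr do rewrite offspring_avg_const //.
by rewrite -big_distrl /= hps mul1r.
Qed.

End Expectation.

Section MeanDynamics.
Variables (R : realType) (T : finType) (p : T -> seq (seq T * R)) (c : T -> R)
  (ps : T -> R) (lam : nat -> R) (Q0 : T -> R).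
Hypothesis hp : offspring_distr p.
Hypothesis hps : \sum_(q : T) ps q = 1.

Lemma qupdateE l Q q b r : qupdate c l Q q b r =
  Q r + (q == r)%:R * (l * (c r + \sum_(t <- b) Q t - Q r)).
Proof.
rewrite /qupdate eq_sym; case: eqP => [->|_]; last by rewrite mul0r addr0.
by rewrite mul1r; ring.
Qed.

Lemma mean_update l Q r :
  \sum_(q : T) ps q * \sum_(a <- p q) a.2 * qupdate c l Q q a.1 r =
  Q r + ps r * l * (c r + Gop p Q r - Q r).
Proof.
set res := l * (c r + Gop p Q r - Q r).
have avg q : \sum_(a <- p q) a.2 * qupdate c l Q q a.1 r =
             Q r + (q == r)%:R * res.
  under eq_bigr => a _ do rewrite qupdateE.
  rewrite (eq_bigr (fun a => a.2 * Q r + (q == r)%:R * l *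
             (a.2 * c r + a.2 * \sum_(t <- a.1) Q t + a.2 * - Q r))); last first.
    by move=> a _; ring.
  rewrite big_split /= -big_distrr /= !big_split /= !offspring_avg_const //.
  by rewrite /res /Gop; case: eqP => [->|_] /=; ring.
under eq_bigr do rewrite avg mulrDr.
rewrite big_split /= -big_distrl /= hps mul1r (bigD1 r) //= eqxx mul1r.
rewrite big1 => [|q /negPf -> /=]; last by rewrite mul0r mulr0.
by rewrite addr0 /res mulrA.
Qed.

Lemma EQ_step i r : EQ p c ps lam Q0 i.+1 r =
  EQ p c ps lam Q0 i r + ps r * lam i *
    (c r + Gop p (EQ p c ps lam Q0 i) r - EQ p c ps lam Q0 i r).
Proof.
have -> : EQ p c ps lam Q0 i.+1 r = expect p c ps lam Q0 i.+1 (fun Q => Q r) by [].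
rewrite expect_step (@expect_ext _ _ p c ps lam Q0 i _ (fun Q : T -> R =>
  Q r + ((ps r * lam i) * c r + (ps r * lam i) * Gop p Q r
         + (- (ps r * lam i)) * Q r))); last by move=> Q; rewrite mean_update; ring.
rewrite !expect_add !expect_scale expect_const // expect_Gop.
by rewrite /EQ /expect; ring.
Qed.

End MeanDynamics.

Section Damping.
Variables (R : realType) (a : R) (lam : nat -> R).
Hypotheses (a0 : 0 <= a) (a1 : a <= 1) (hlam : forall k, 0 <= lam k <= 1).

Definition damping n := \prod_(0 <= k < n) (1 - a * lam k).

Lemma dampingS n : damping n.+1 = damping n * (1 - a * lam n).
Proof. by rewrite /damping big_nat_recr. Qed.

Lemma damping_factor_ge0 k : 0 <= 1 - a * lam k.
Proof.
have /andP [l0 l1] := hlam k.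
by rewrite subr_ge0 -[1]mulr1; apply: ler_pM.
Qed.

Lemma damping_ge0 n : 0 <= damping n.
Proof. by apply: prodr_ge0 => k _; exact: damping_factor_ge0. Qed.

Lemma sum_lam_ge0 n : 0 <= \sum_(0 <= k < n) lam k.
Proof. by apply: sumr_ge0 => k _; have /andP [] := hlam k. Qed.

Lemma damping_sum_le1 n : damping n * (1 + a * \sum_(0 <= k < n) lam k) <= 1.
Proof.
elim: n => [|n IH]; first by rewrite /damping !big_geq // mul1r mulr0 addr0.
rewrite dampingS big_nat_recr //=.
have /andP [l0 l1] := hlam n.
have s0 := sum_lam_ge0 n; have P0 := damping_ge0 n.
move: IH; set s := \sum_(0 <= k < n) lam k; set P := damping n => IH.
have al0 : 0 <= a * lam n by apply: mulr_ge0.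
have as0 : 0 <= a * s by apply: mulr_ge0.
have : 0 <= P * (a * lam n) * (a * s + a * lam n).
  by apply: mulr_ge0; [apply: mulr_ge0|apply: addr_ge0].
nra.
Qed.

Lemma damping_cvg0 : 0 < a ->
  (fun n => \sum_(0 <= k < n) lam k) @ \oo --> +oo -> damping n @[n --> \oo] --> 0.
Proof.
move=> a_gt0 hsum; apply/cvgrPdist_lt => e e0; near=> n.
have hs : (a * e)^-1 <= \sum_(0 <= k < n) lam k by near: n; exact: cvgry_ge.
rewrite sub0r normrN ger0_norm ?damping_ge0 //.
have := damping_sum_le1 n; have := damping_ge0 n; have := sum_lam_ge0 n.
move: hs; set s := \sum_(0 <= k < n) lam k; set P := damping n.
move=> hs s0 P0 hP.
have ae0 : 0 < a * e by apply: mulr_gt0.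
have aes : 1 <= a * e * s.
  by have := ler_wpM2l (ltW ae0) hs; rewrite mulfV ?gt_eqF // mulrA.
rewrite ltNge; apply/negP => eP.
have : e * (a * s) <= P * (a * s) by apply: ler_wpM2r => //; apply: mulr_ge0.
nra.
Unshelve. all: end_near.
Qed.

End Damping.

Section Contraction.
Variables (R : realType) (T : finType) (p : T -> seq (seq T * R))
  (c v ps : T -> R) (pmin eps : R).
Hypothesis hp : offspring_distr p.
Hypothesis hc : cost_pos c.
Hypothesis hv : forall r, v r = c r + Gop p v r.
Hypothesis hepsc : forall r, eps * v r <= c r.
Hypothesis hpmin : 0 <= pmin.
Hypothesis hpsmin : forall r, pmin <= ps r.
Hypothesis hps1 : forall r, ps r <= 1.

(* One relaxation step with rate [l] shrinks a relative error bound
   [|x - v| <= B v] around the fixed point [v] by the factor [1 - pmin eps l]: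
   the cost [c >= eps v] is the part of [v] not propagated by [Gop]. *)
Lemma relax_contract (x : T -> R) (l B : R) r : 0 <= l <= 1 -> 0 <= B ->
  (forall t, `|x t - v t| <= B * v t) ->
  `|x r + ps r * l * (c r + Gop p x r - x r) - v r| <=
    B * (1 - pmin * eps * l) * v r.
Proof.
move=> /andP [l0 l1] B0 hx.
have w0 : 0 <= ps r * l by apply: mulr_ge0 => //; exact: le_trans (hpsmin r).
have w1 : 1 - ps r * l >= 0.
  by rewrite subr_ge0 -[1]mulr1; apply: ler_pM => //; exact: le_trans (hpsmin r).
set d := fun t => x t - v t.
have hGd : `|Gop p d r| <= B * (v r - c r).
  apply: le_trans (Gop_norm_le hp r hx) _.
  by rewrite Gop_scale [X in _ <= _ * (X - _)](hv r) addrAC subrr add0r.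
have -> : x r + ps r * l * (c r + Gop p x r - x r) - v r =
          (1 - ps r * l) * d r + ps r * l * Gop p d r.
  by rewrite /d Gop_sub (hv r); ring.
apply: le_trans (ler_normD _ _) _.
rewrite (normrM (1 - _)) (normrM (ps r * l)) (ger0_norm w0) (ger0_norm w1).
have h1 := ler_wpM2l w1 (hx r).
have h2 := ler_wpM2l w0 hGd.
have h3 : 0 <= (ps r - pmin) * l * B * c r.
  apply: mulr_ge0; last exact: ltW (hc r).
  by apply: mulr_ge0 => //; apply: mulr_ge0 => //; rewrite subr_ge0.
have h4 : 0 <= pmin * l * B * (c r - eps * v r).
  by apply: mulr_ge0; [apply: mulr_ge0 => //; apply: mulr_ge0|rewrite subr_ge0].
nra.
Qed.

Lemma relax_bound (lam : nat -> R) (E : nat -> T -> R) (B : R) :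
  0 <= pmin * eps <= 1 -> (forall k, 0 <= lam k <= 1) -> 0 <= B ->
  (forall n r, E n.+1 r = E n r + ps r * lam n * (c r + Gop p (E n) r - E n r)) ->
  (forall t, `|E 0%N t - v t| <= B * v t) ->
  forall n r, `|E n r - v r| <= B * damping (pmin * eps) lam n * v r.
Proof.
move=> /andP [a0 a1] hlam B0 hE hE0; elim=> [|n IH] r.
  by rewrite /damping big_geq // mulr1.
rewrite hE dampingS mulrA; apply: relax_contract => //.
by apply: mulr_ge0 => //; exact: damping_ge0.
Qed.

End Contraction.

Lemma cost_ratio (R : realType) (T : finType) (c v : T -> R) :
  cost_pos c -> (forall r, 0 <= v r) ->
  exists2 eps, 0 < eps <= 1 & forall r, eps * v r <= c r.
Proof.
move=> hc v0; set S := \sum_r v r / c r.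
have S0 : 0 <= S by apply: sumr_ge0 => r _; apply: divr_ge0; [|apply: ltW].
exists (1 + S)^-1.
  by rewrite invr_gt0 invf_le1; lra.
move=> r; have cr := hc r.
have hr : v r / c r <= S.
  by rewrite /S (bigD1 r) //= lerDl; apply: sumr_ge0 => t _;
    apply: divr_ge0; [|apply: ltW].
rewrite mulrC ler_pdivrMr; last lra.
by move: hr; rewrite ler_pdivrMr //; nra.
Qed.

Lemma cvg_dist_le (R : realType) (u w : nat -> R) (l K : R) :
  (forall n, `|u n - l| <= K * w n) -> w n @[n --> \oo] --> 0 ->
  u n @[n --> \oo] --> l.
Proof.
move=> hu w0.
have Kw0 : K * w n @[n --> \oo] --> 0.
  by rewrite -(mulr0 K); apply: cvgM => //; exact: cvg_cst.
apply: (@squeeze_cvgr _ _ _ _ (fun n => l - K * w n) (fun n => l + K * w n)).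
- by near=> n; have := hu n; rewrite ler_norml; lra.
- by rewrite -[X in _ --> X]subr0; apply: cvgB => //; exact: cvg_cst.
- by rewrite -[X in _ --> X]addr0; apply: cvgD => //; exact: cvg_cst.
Unshelve. all: end_near.
Qed.

Theorem lemma4 (R : realType) (T : finType)
  (p : T -> seq (seq T * R)) (c : T -> R) (cs : T -> \bar R)
  (lam : nat -> R) (ps : T -> R) (pmin kappa : R) :
  offspring_distr p -> cost_pos c ->
  is_cstar p c cs -> (forall q, (cs q < +oo)%E) ->
  (forall i, 0 <= lam i <= 1) ->
  (fun n => \sum_(0 <= k < n) lam k) @ \oo --> +oo ->
  0 < pmin -> (forall q, pmin <= ps q) -> \sum_(q : T) ps q = 1 ->
  0 <= kappa ->
  forall q, (fun i => EQ p c ps lam (fun r => kappa * fine (cs r)) i q) @ \oo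
              --> fine (cs q).
Proof.
move=> hp hc hcs csfin hlam hsum hpmin hpsmin hps _ q.
have [v0 hv] := cstar_real_fixpoint hcs csfin.
have [eps /andP [eps0 eps1] hepsc] := cost_ratio hc v0.
have hps1 r : ps r <= 1.
  rewrite -hps (bigD1 r) //= lerDl; apply: sumr_ge0 => t _.
  exact: le_trans (ltW hpmin) (hpsmin t).
have a0 : 0 < pmin * eps by apply: mulr_gt0.
have a1 : pmin * eps <= 1.
  by rewrite -[1]mulr1; apply: ler_pM => //; [exact: ltW|exact: ltW|
    exact: le_trans (hpsmin q) (hps1 q)].
have init t : `|EQ p c ps lam (fun r => kappa * fine (cs r)) 0 t - fine (cs t)|
               <= `|kappa - 1| * fine (cs t).
  rewrite /EQ big_seq1 mul1r /= -{2}(mul1r (fine (cs t))) -mulrBl normrM.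
  by rewrite (ger0_norm (v0 t)).
have a01 : 0 <= pmin * eps <= 1 by rewrite (ltW a0) a1.
have bound := relax_bound hp hc hv hepsc (ltW hpmin) hpsmin hps1 a01 hlam (normr_ge0 _) (EQ_step _ _ _ hp hps) init.
apply: (@cvg_dist_le _ _ (damping (pmin * eps) lam) _ (`|kappa - 1| * fine (cs q))).
  by move=> n; rewrite mulrAC; exact: bound.
exact: (damping_cvg0 (ltW a0) a1 hlam a0 hsum).
Qed.
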